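(* Purifying extensions are insufficient for the infimum in squashed entanglement: there exist finite-dimensional bipartite densities $\rho^{AB}$ for which the infimum of $I(A:B|C)_{\tilde\rho}$ over only pure extensions (pure states $\tilde\rho^{ABC}$ with $\operatorname{tr}_C\tilde\rho^{ABC}=\rho^{AB}$) is strictly larger than $E_{sq}(A:B)_\rho$. (Equivalently, the same holds for $I_{sq}(\mathcal{A}:\mathcal{B})_\rho$ with $\mathcal{A}=\mathbb{B}(\mathcal{H}_A)\otimes 1$, $\mathcal{B}=1\otimes\mathbb{B}(\mathcal{H}_B)$, which coincides with $E_{sq}(A:B)_\rho$.)
   Context: $I(A:B|C)_\rho = H(AC)_\rho+H(BC)_\rho-H(C)_\rho-H(ABC)_\rho$ with $H(X)_\rho$ the von Neumann entropy of the reduced density on $X$. Squashed entanglement: $E_{sq}(A:B)_\rho=\inf\{ I(A:B|C)_{\tilde\rho} : \tilde\rho^{ABC},\ \tilde\rho^{AB}=\rho^{AB}\}$, the infimum over all finite-dimensional extensions. *)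

From HB Require Import structures.
From mathcomp Require Import all_boot all_order all_algebra.
From mathcomp Require Import sesquilinear spectral.
From mathcomp Require Import complex mxtens.
From mathcomp Require Import all_classical all_reals ereal exp.

Set Implicit Arguments.
Unset Strict Implicit.
Unset Printing Implicit Defensive.

Import Order.TTheory GRing.Theory Num.Theory.
Local Open Scope ring_scope.
Local Open Scope sesquilinear_scope.

Section Quantum.
Variable R : realType.
Local Notation C := (R[i]).

Definition adj m n (M : 'M[C]_(m, n)) : 'M[C]_(n, m) := M ^t*.

Definition psd n (M : 'M[C]_n) : Prop :=
  forall v : 'cV[C]_n, 0 <= (adj v *m M *m v) 0 0.

Definition density n (M : 'M[C]_n) : Prop :=
  M \is hermsymmx /\ psd M /\ \tr M = 1.

Definition pure n (M : 'M[C]_n) : Prop :=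
  density M /\ exists v : 'cV[C]_n, M = v *m adj v.

(* von Neumann entropy H(M) = - tr M ln M = - sum_i l_i ln l_i, where the l_i
   are the eigenvalues of the hermitian matrix M (diagonal of its spectral
   decomposition); with the convention 0 ln 0 = 0 (ln 0 = 0 in the library). *)
Definition vN_entropy n (M : 'M[C]_n) : R :=
  - \sum_(i < n) (let l := complex.Re (spectral_diag M 0 i) in l * ln l).

(* Tripartite system A B C, Hilbert space C^dA (x) C^dB (x) C^dC, with
   Kronecker index ordering ((a, b), c). *)
Definition idx3 (dA dB dC : nat) (a : 'I_dA) (b : 'I_dB) (c : 'I_dC)
  : 'I_(dA * dB * dC) := mxtens_index (mxtens_index (a, b), c).

Definition idx2 (dX dY : nat) (x : 'I_dX) (y : 'I_dY) : 'I_(dX * dY) :=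
  mxtens_index (x, y).
Definition fst2 (dX dY : nat) (k : 'I_(dX * dY)) : 'I_dX := (mxtens_unindex k).1.
Definition snd2 (dX dY : nat) (k : 'I_(dX * dY)) : 'I_dY := (mxtens_unindex k).2.

Variables dA dB dC : nat.
Implicit Type M : 'M[C]_(dA * dB * dC).

Definition red_AB M : 'M[C]_(dA * dB) :=
  \matrix_(i, j) \sum_(c < dC)
     M (idx3 (fst2 i) (snd2 i) c) (idx3 (fst2 j) (snd2 j) c).
Definition red_AC M : 'M[C]_(dA * dC) :=
  \matrix_(i, j) \sum_(b < dB)
     M (idx3 (fst2 i) b (snd2 i)) (idx3 (fst2 j) b (snd2 j)).
Definition red_BC M : 'M[C]_(dB * dC) :=
  \matrix_(i, j) \sum_(a < dA)
     M (idx3 a (fst2 i) (snd2 i)) (idx3 a (fst2 j) (snd2 j)).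
Definition red_C M : 'M[C]_dC :=
  \matrix_(i, j) \sum_(a < dA) \sum_(b < dB) M (idx3 a b i) (idx3 a b j).

Definition cmi M : R :=
  vN_entropy (red_AC M) + vN_entropy (red_BC M)
  - vN_entropy (red_C M) - vN_entropy M.

End Quantum.

Local Open Scope classical_set_scope.

Definition squashed_ent (R : realType) (dA dB : nat) (rho : 'M[R[i]]_(dA * dB))
  : \bar R :=
  ereal_inf [set (cmi (projT2 x))%:E | x in
    [set x : {dC : nat & 'M[R[i]]_(dA * dB * dC)} |
       density (projT2 x) /\ red_AB (projT2 x) = rho]].

Definition squashed_ent_pure (R : realType) (dA dB : nat) (rho : 'M[R[i]]_(dA * dB))
  : \bar R :=
  ereal_inf [set (cmi (projT2 x))%:E | x in
    [set x : {dC : nat & 'M[R[i]]_(dA * dB * dC)} |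
       pure (projT2 x) /\ red_AB (projT2 x) = rho]].

(* The classically maximally correlated state rho = (1/n) sum_a |aa><aa| has the
   classical extension (1/n) sum_a |aaa><aaa|, whose reductions to AC and BC are
   again rho and whose reduction to C is maximally mixed, so its I(A:B|C) is
   ln n + ln n - ln n - ln n = 0.  For a pure extension v, each reduced state is a
   Gram matrix Z Z^* of a reshaping Z of v, and Z^* Z is the conjugate of a
   reduction of rho: maximally mixed for AC and BC, rho itself for C.  These are
   diagonal with entries in {0, c}, so (Z Z^* )^2 = c Z Z^* and Z Z^* has the same
   entropy as Z^* Z.  Since the pure state itself has entropy 0, every pure
   extension has I(A:B|C) = ln n + ln n - ln n = ln n > 0 once n >= 2. *)

From HB Require Import structures.
From mathcomp Require Import all_boot all_order all_algebra.
From mathcomp Require Import sesquilinear spectral complex mxtens.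
From mathcomp Require Import all_classical all_reals ereal exp.
Set Implicit Arguments.
Unset Strict Implicit.
Unset Printing Implicit Defensive.

Import Order.TTheory GRing.Theory Num.Theory Num.Def.
Local Open Scope ring_scope.
Local Open Scope sesquilinear_scope.

Section QuantumEntropy.
Variable R : realType.
Local Notation C := (R[i]).

Lemma Re_sum (I : Type) (r : seq I) (P : pred I) (F : I -> C) :
  complex.Re (\sum_(i <- r | P i) F i) = \sum_(i <- r | P i) complex.Re (F i).
Proof. by apply: (big_morph (@complex.Re R)) => // [[a b] [c d]]. Qed.

Lemma Re_natV (k : nat) : complex.Re (k%:R^-1 : C) = k%:R^-1.
Proof. by rewrite -(rmorph_nat (real_complex R)) -fmorphV. Qed.

Lemma conj_natV (k : nat) : conjC (k%:R^-1 : C) = k%:R^-1.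
Proof. by rewrite fmorphV /= rmorph_nat. Qed.

Lemma mulrn_natrV (F : numFieldType) (k : nat) : (0 < k)%N -> (k%:R^-1 : F) *+ k = 1.
Proof. by move=> k_gt0; rewrite -[LHS]mulr_natr mulVf // pnatr_eq0 -lt0n. Qed.

(* Spectral decomposition: A = P^* diag(d) P, and A^2 = c A forces each d_i to be 0 or c. *)
Lemma vN_entropy_scaled_idem n (A : 'M[C]_n) (c : C) :
  A \is normalmx -> A *m A = c *: A ->
  vN_entropy A = - (complex.Re (\tr A) * ln (complex.Re c)).
Proof.
move=> /orthomx_spectralP hA hAA.
have PU : spectralmx A *m (spectralmx A)^t* = 1%:M := unitarymxP (spectral_unitarymx A).
have PU' := mulmx1C PU.
move: hA; rewrite invmx_unitary ?spectral_unitarymx //.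
set P := spectralmx A in PU PU' *; set d := spectral_diag A => hA.
have hD : diag_mx d = P *m A *m P^t*.
  by rewrite [in RHS]hA !mulmxA PU mul1mx -mulmxA PU mulmx1.
have hDD : diag_mx d *m diag_mx d = c *: diag_mx d.
  rewrite hD !mulmxA -(mulmxA _ (P^t*) P) PU' mulmx1 -(mulmxA P A A) hAA.
  by rewrite -scalemxAr -scalemxAl.
have d_flat i : d 0 i = 0 \/ d 0 i = c.
  have /matrixP /(_ i i) := hDD.
  rewrite mulmx_diag !mxE eqxx !mulr1n => /eqP.
  rewrite -subr_eq0 -mulrBl mulf_eq0 subr_eq0 => /orP[/eqP|/eqP]; by [right|left].
have trA : \tr A = \sum_i d 0 i.
  by rewrite [in LHS]hA mxtrace_mulC mulmxA PU mul1mx mxtrace_diag.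
rewrite /vN_entropy -/d trA Re_sum mulr_suml; congr (- _); apply: eq_bigr => i _ /=.
by case: (d_flat i) => ->; rewrite // (_ : complex.Re 0 = 0) // !mul0r.
Qed.

Lemma vN_entropy_flat_diag n (h : 'I_n -> C) (c : C) :
  (forall i, h i = 0 \/ h i = c) ->
  vN_entropy (diag_mx (\row_i h i)) = - (complex.Re (\sum_i h i) * ln (complex.Re c)).
Proof.
move=> h_flat; rewrite (vN_entropy_scaled_idem (c := c)).
- by rewrite mxtrace_diag (eq_bigr _ (fun i _ => mxE _ _ _ _)).
- by apply/normalmxP; rewrite tr_diag_mx map_diag_mx diag_mxC.
apply/matrixP => i j; rewrite mulmx_diag !mxE.
case: eqP => [->|_]; last by rewrite !mulr0n mulr0.
by rewrite !mulr1n; case: (h_flat j) => ->; rewrite ?mulr0 ?mul0r.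
Qed.

Lemma vN_entropy_uniform_diag n (k : nat) (h : 'I_n -> C) :
  (forall i, h i = 0 \/ h i = k%:R^-1) -> \sum_i h i = 1 ->
  vN_entropy (diag_mx (\row_i h i)) = ln k%:R.
Proof.
move=> h_flat h_sum; rewrite (vN_entropy_flat_diag h_flat) h_sum Re_natV mul1r.
have [->|k_gt0] := posnP k; first by rewrite invr0 ln0 ?oppr0.
by rewrite lnV ?opprK // posrE ltr0n.
Qed.

Lemma gram_diag_eq0 m n (Z : 'M[C]_(m, n)) k :
  (Z^t* *m Z) k k = 0 -> forall i, Z i k = 0.
Proof.
rewrite mxE => /eqP; rewrite psumr_eq0 => [/allP Z0 i|i _]; last first.
  by rewrite !mxE -normCKC exprn_ge0.
by move: (Z0 i (mem_index_enum _)); rewrite /= !mxE -normCKC sqrf_eq0 normr_eq0 => /eqP.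
Qed.

Lemma gram_flat_mulmx m n (Z : 'M[C]_(m, n)) (h : 'I_n -> C) (c : C) :
  (forall i, h i = 0 \/ h i = c) -> Z^t* *m Z = diag_mx (\row_i h i) ->
  Z^t* *m Z *m Z^t* = c *: Z^t*.
Proof.
move=> h_flat hZ; rewrite hZ; apply/matrixP => k j; rewrite mul_diag_mx !mxE.
case: (h_flat k) => [hk0|-> //].
have /gram_diag_eq0 -> : (Z^t* *m Z) k k = 0 by rewrite hZ mxE eqxx mxE hk0.
by rewrite conjC0 !mulr0.
Qed.

Lemma gram_normalmx m n (Z : 'M[C]_(m, n)) : Z *m Z^t* \is normalmx.
Proof. by apply/hermitian_normalmx/is_hermitianmxP; rewrite expr0 scale1r trmx_mul map_mxM trmxCK. Qed.

(* Flatness of Z^* Z avoids the general fact that Z Z^* and Z^* Z share their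
   nonzero spectrum: both are then scaled idempotents with the same trace. *)
Lemma vN_entropy_gram_flat m n (Z : 'M[C]_(m, n)) (h : 'I_n -> C) (c : C) :
  (forall i, h i = 0 \/ h i = c) -> Z^t* *m Z = diag_mx (\row_i h i) ->
  vN_entropy (Z *m Z^t*) = vN_entropy (Z^t* *m Z).
Proof.
move=> h_flat hZ; rewrite (vN_entropy_scaled_idem (c := c) (gram_normalmx Z)).
  by rewrite mxtrace_mulC hZ (vN_entropy_flat_diag h_flat) mxtrace_diag
    (eq_bigr _ (fun i _ => mxE _ _ _ _)).
by rewrite !mulmxA -(mulmxA Z) -(mulmxA Z) (gram_flat_mulmx h_flat hZ) scalemxAr.
Qed.

Lemma vN_entropy_pure n (M : 'M[C]_n) : pure M -> vN_entropy M = 0.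
Proof.
move=> [[_ [_ trM]] [v M_vv]]; rewrite M_vv /adj in trM *.
have vv : v^t* *m v = diag_mx (\row_(i < 1) 1).
  apply/matrixP => i j; rewrite !ord1 !mxE /= mulr1n -trM mxtrace_mulC.
  by rewrite /mxtrace big_ord1 mxE.
rewrite (vN_entropy_gram_flat (c := 1) _ vv) ?vv; last by right.
by rewrite (vN_entropy_uniform_diag (k := 1)) ?invr1 ?ln1 // => [_|]; [right|rewrite big_ord1].
Qed.

Lemma density_diag n (h : 'I_n -> C) :
  (forall i, 0 <= h i) -> \sum_i h i = 1 -> density (diag_mx (\row_i h i)).
Proof.
move=> h_ge0 h_sum; split; [|split].
- apply/is_hermitianmxP; rewrite expr0 scale1r tr_diag_mx map_diag_mx.
  by congr diag_mx; apply/rowP => i; rewrite !mxE [RHS]geC0_conj.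
- move=> v; rewrite mxE sumr_ge0 // => j _.
  rewrite mul_mx_diag !mxE -mulrA mulrC -mulrA mulr_ge0 //.
  by rewrite mulrC -normCKC exprn_ge0.
by rewrite mxtrace_diag (eq_bigr _ (fun i _ => mxE _ _ _ _)).
Qed.

Lemma fst2_idx2 m n (x : 'I_m) (y : 'I_n) : fst2 (idx2 x y) = x.
Proof. by rewrite /fst2 /idx2 mxtens_indexK. Qed.

Lemma snd2_idx2 m n (x : 'I_m) (y : 'I_n) : snd2 (idx2 x y) = y.
Proof. by rewrite /snd2 /idx2 mxtens_indexK. Qed.

Lemma idx2_fst2_snd2 m n (k : 'I_(m * n)) : idx2 (fst2 k) (snd2 k) = k.
Proof. by rewrite /idx2 /fst2 /snd2 -surjective_pairing mxtens_unindexK. Qed.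

Lemma eq_idx2 m n (x x' : 'I_m) (y y' : 'I_n) :
  (idx2 x y == idx2 x' y') = (x == x') && (y == y').
Proof. by rewrite /idx2 (inj_eq (can_inj (@mxtens_indexK m n))) xpair_eqE. Qed.

Lemma eq_fst2_snd2 m n (k k' : 'I_(m * n)) :
  (fst2 k == fst2 k') && (snd2 k == snd2 k') = (k == k').
Proof. by rewrite -eq_idx2 !idx2_fst2_snd2. Qed.

Lemma sum_idx2 m n (F : 'I_(m * n) -> C) :
  \sum_(k < m * n) F k = \sum_(x < m) \sum_(y < n) F (idx2 x y).
Proof.
rewrite pair_big /= (reindex (fun p : 'I_m * 'I_n => idx2 p.1 p.2)) //=.
exists (fun k => (fst2 k, snd2 k)) => [[x y] _|k _] /=.
  by rewrite fst2_idx2 snd2_idx2.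
by rewrite idx2_fst2_snd2.
Qed.

Lemma sum_if_eq1 n (a : 'I_n) (x : C) : \sum_(b < n) (if a == b then x else 0) = x.
Proof. by rewrite -big_mkcond /= (big_pred1 a) // => b; rewrite eq_sym. Qed.

Lemma sum_if_eq1_and n (a : 'I_n) (P : pred 'I_n) (x : C) :
  \sum_(b < n) (if (b == a) && P b then x else 0) = if P a then x else 0.
Proof. by rewrite -big_mkcond big_mkcondr big_pred1_eq. Qed.

Lemma rank1_mxE n (v : 'cV[C]_n) x y : (v *m v^t*) x y = v x 0 * (v y 0)^*.
Proof. by rewrite mxE big_ord1 !mxE. Qed.

Section PureState.
Variables dA dB dC : nat.
Variable v : 'cV[C]_(dA * dB * dC).

Definition red2_A (rho : 'M[C]_(dA * dB)) : 'M[C]_dA :=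
  \matrix_(a, a') \sum_(b < dB) rho (idx2 a b) (idx2 a' b).
Definition red2_B (rho : 'M[C]_(dA * dB)) : 'M[C]_dB :=
  \matrix_(b, b') \sum_(a < dA) rho (idx2 a b) (idx2 a b').

(* The amplitudes v_(abc), arranged as matrices whose row index is the
   subsystem kept by the partial trace. *)
Definition amp_AC : 'M[C]_(dA * dC, dB) :=
  \matrix_(i, b) v (idx3 (fst2 i) b (snd2 i)) 0.
Definition amp_BC : 'M[C]_(dB * dC, dA) :=
  \matrix_(i, a) v (idx3 a (fst2 i) (snd2 i)) 0.
Definition amp_C : 'M[C]_(dC, dA * dB) :=
  \matrix_(c, k) v (idx3 (fst2 k) (snd2 k) c) 0.

Local Notation rho_AB := (red_AB (v *m v^t*)).

Lemma red_AC_rank1 : red_AC (v *m v^t*) = amp_AC *m amp_AC^t*.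
Proof. by apply/matrixP => i j; rewrite !mxE; apply: eq_bigr => b _; rewrite rank1_mxE !mxE. Qed.

Lemma red_BC_rank1 : red_BC (v *m v^t*) = amp_BC *m amp_BC^t*.
Proof. by apply/matrixP => i j; rewrite !mxE; apply: eq_bigr => a _; rewrite rank1_mxE !mxE. Qed.

Lemma red_C_rank1 : red_C (v *m v^t*) = amp_C *m amp_C^t*.
Proof.
apply/matrixP => i j; rewrite !mxE sum_idx2; apply: eq_bigr => a _.
by apply: eq_bigr => b _; rewrite rank1_mxE !mxE fst2_idx2 snd2_idx2.
Qed.

Lemma conj_red_AB_rank1 a b a' b' :
  (rho_AB (idx2 a b) (idx2 a' b'))^* =
  \sum_(c < dC) (v (idx3 a b c) 0)^* * v (idx3 a' b' c) 0.
Proof.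
rewrite mxE !fst2_idx2 !snd2_idx2 rmorph_sum; apply: eq_bigr => c _.
by rewrite rank1_mxE rmorphM /= conjCK.
Qed.

Lemma gram_amp_AC : amp_AC^t* *m amp_AC = red2_B rho_AB ^ conjC.
Proof.
apply/matrixP => b b'; rewrite !mxE sum_idx2 rmorph_sum /=; apply: eq_bigr => a _.
by rewrite conj_red_AB_rank1; apply: eq_bigr => c _; rewrite !mxE fst2_idx2 snd2_idx2.
Qed.

Lemma gram_amp_BC : amp_BC^t* *m amp_BC = red2_A rho_AB ^ conjC.
Proof.
apply/matrixP => a a'; rewrite !mxE sum_idx2 rmorph_sum /=; apply: eq_bigr => b _.
by rewrite conj_red_AB_rank1; apply: eq_bigr => c _; rewrite !mxE fst2_idx2 snd2_idx2.
Qed.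

Lemma gram_amp_C : amp_C^t* *m amp_C = rho_AB ^ conjC.
Proof.
apply/matrixP => k k'; rewrite -[k]idx2_fst2_snd2 -[k']idx2_fst2_snd2.
rewrite [RHS]mxE conj_red_AB_rank1 mxE; apply: eq_bigr => c _.
by rewrite !mxE !fst2_idx2 !snd2_idx2.
Qed.

End PureState.

Section MaximallyCorrelated.
Variable n : nat.
Hypothesis n_gt0 : (0 < n)%N.
Local Notation w := (n%:R^-1 : C).
Local Notation maxmixed := (diag_mx (\row_(i < n) w)).

Lemma weight_flat (b : bool) :
  (if b then w else 0) = 0 \/ (if b then w else 0) = w.
Proof. by case: b; [right|left]. Qed.

Lemma weight_ge0 (b : bool) : 0 <= (if b then w else 0).
Proof. by case: b; rewrite // invr_ge0 ler0n. Qed.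

Lemma conj_weight (b : bool) : (if b then w else 0)^* = if b then w else 0.
Proof. by case: b; rewrite ?conj_natV ?conjC0. Qed.

Lemma sum_weight : \sum_(i < n) w = 1.
Proof. by rewrite sumr_const card_ord mulrn_natrV. Qed.

Definition maxcorr : 'M[C]_(n * n) :=
  diag_mx (\row_k if fst2 k == snd2 k then w else 0).

Definition maxcorr_ext : 'M[C]_(n * n * n) :=
  diag_mx (\row_i if (fst2 (fst2 i) == snd2 (fst2 i)) && (snd2 (fst2 i) == snd2 i)
                  then w else 0).

Lemma maxcorr_extE a b c a' b' c' :
  maxcorr_ext (idx3 a b c) (idx3 a' b' c') =
  (if (a == b) && (b == c) then w else 0) *+ [&& a == a', b == b' & c == c'].
Proof. by rewrite /idx3 -/idx2 !mxE !eq_idx2 !fst2_idx2 !snd2_idx2 andbA. Qed.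

Lemma sum_maxcorr : \sum_(k < n * n) (if fst2 k == snd2 k then w else 0) = 1.
Proof.
rewrite sum_idx2 -[RHS]sum_weight; apply: eq_bigr => a _.
by under eq_bigr => b _ do rewrite fst2_idx2 snd2_idx2; rewrite sum_if_eq1.
Qed.

Lemma maxcorr_density : density maxcorr.
Proof. by apply: density_diag => [k|]; [exact: weight_ge0|exact: sum_maxcorr]. Qed.

Lemma sum_maxcorr_ext :
  \sum_(i < n * n * n) (if (fst2 (fst2 i) == snd2 (fst2 i)) && (snd2 (fst2 i) == snd2 i)
                         then w else 0) = 1.
Proof.
rewrite sum_idx2 -[RHS]sum_maxcorr; apply: eq_bigr => k _.
under eq_bigr => c _ do rewrite fst2_idx2 snd2_idx2.
by case: eqP => _ /=; [exact: sum_if_eq1 | rewrite big1].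
Qed.

Lemma maxcorr_ext_density : density maxcorr_ext.
Proof. by apply: density_diag => [i|]; [exact: weight_ge0|exact: sum_maxcorr_ext]. Qed.

Lemma red_AB_maxcorr_ext : red_AB maxcorr_ext = maxcorr.
Proof.
apply/matrixP => i j; rewrite !mxE.
under eq_bigr => c _ do rewrite maxcorr_extE eqxx andbT eq_fst2_snd2.
rewrite sumrMnl; congr (_ *+ _).
by case: eqP => _ /=; [exact: sum_if_eq1 | rewrite big1].
Qed.

Lemma red_AC_maxcorr_ext : red_AC maxcorr_ext = maxcorr.
Proof.
apply/matrixP => i j; rewrite !mxE.
under eq_bigr => b _ do rewrite maxcorr_extE eqxx /= eq_fst2_snd2.
rewrite sumrMnl; congr (_ *+ _); case: (fst2 i =P snd2 i) => [<-|ne] /=.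
  by under eq_bigr => b _ do rewrite [b == _]eq_sym andbb; exact: sum_if_eq1.
by apply: big1 => b _; case: (fst2 i =P b) => [<-|] //=; case: eqP.
Qed.

Lemma red_BC_maxcorr_ext : red_BC maxcorr_ext = maxcorr.
Proof.
apply/matrixP => i j; rewrite !mxE.
under eq_bigr => a _ do rewrite maxcorr_extE eqxx /= eq_fst2_snd2.
rewrite sumrMnl; congr (_ *+ _); case: eqP => [->|_]; last by rewrite big1 // => a _; rewrite andbF.
by under eq_bigr => a _ do rewrite andbT eq_sym; exact: sum_if_eq1.
Qed.

Lemma red_C_maxcorr_ext : red_C maxcorr_ext = maxmixed.
Proof.
apply/matrixP => i j; rewrite !mxE.
under eq_bigr => a _ do under eq_bigr => b _ do rewrite maxcorr_extE !eqxx /=.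
under eq_bigr => a _ do rewrite sumrMnl.
rewrite sumrMnl exchange_big /=; congr (_ *+ _).
under eq_bigr => b _ do rewrite (sum_if_eq1_and b (fun=> b == i)) eq_sym.
exact: sum_if_eq1.
Qed.

Lemma red2_A_maxcorr : red2_A maxcorr = maxmixed.
Proof.
apply/matrixP => a a'; rewrite !mxE.
under eq_bigr => b _ do rewrite !mxE eq_idx2 eqxx andbT fst2_idx2 snd2_idx2.
by rewrite sumrMnl sum_if_eq1.
Qed.

Lemma red2_B_maxcorr : red2_B maxcorr = maxmixed.
Proof.
apply/matrixP => b b'; rewrite !mxE.
under eq_bigr => a _ do rewrite !mxE eq_idx2 eqxx fst2_idx2 snd2_idx2 /= eq_sym.
by rewrite sumrMnl sum_if_eq1.
Qed.

Lemma conj_maxmixed : maxmixed ^ conjC = maxmixed.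
Proof. by rewrite map_diag_mx; congr diag_mx; apply/rowP => i; rewrite !mxE /= conj_natV. Qed.

Lemma conj_maxcorr : maxcorr ^ conjC = maxcorr.
Proof. by rewrite map_diag_mx; congr diag_mx; apply/rowP => k; rewrite !mxE /= conj_weight. Qed.

Lemma vN_entropy_maxmixed : vN_entropy maxmixed = ln n%:R.
Proof. by apply: vN_entropy_uniform_diag sum_weight => i; right. Qed.

Lemma vN_entropy_maxcorr : vN_entropy maxcorr = ln n%:R.
Proof. by apply: vN_entropy_uniform_diag sum_maxcorr => k; exact: weight_flat. Qed.

Lemma cmi_maxcorr_ext : cmi maxcorr_ext = 0.
Proof.
rewrite /cmi red_AC_maxcorr_ext red_BC_maxcorr_ext red_C_maxcorr_ext.
rewrite vN_entropy_maxcorr vN_entropy_maxmixed.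
rewrite (vN_entropy_uniform_diag (k := n)) ?addrK ?subrr // => [i|].
  exact: weight_flat.
exact: sum_maxcorr_ext.
Qed.

Lemma cmi_pure_ext_maxcorr dC (M : 'M[C]_(n * n * dC)) :
  pure M -> red_AB M = maxcorr -> cmi M = ln n%:R.
Proof.
move=> pM; have HM := vN_entropy_pure pM.
case: pM => _ [v M_vv]; rewrite /cmi HM M_vv /adj => rho_AB.
have gAC : (amp_AC v)^t* *m amp_AC v = maxmixed.
  by rewrite gram_amp_AC rho_AB red2_B_maxcorr conj_maxmixed.
have gBC : (amp_BC v)^t* *m amp_BC v = maxmixed.
  by rewrite gram_amp_BC rho_AB red2_A_maxcorr conj_maxmixed.
have gC : (amp_C v)^t* *m amp_C v = maxcorr by rewrite gram_amp_C rho_AB conj_maxcorr.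
rewrite red_AC_rank1 red_BC_rank1 red_C_rank1.
rewrite (vN_entropy_gram_flat (c := w) _ gAC) ?gAC; last by right.
rewrite (vN_entropy_gram_flat (c := w) _ gBC) ?gBC; last by right.
rewrite (vN_entropy_gram_flat (c := w) _ gC) ?gC; last by move=> k; exact: weight_flat.
by rewrite vN_entropy_maxmixed vN_entropy_maxcorr addrK subr0.
Qed.

End MaximallyCorrelated.

End QuantumEntropy.

Local Open Scope ereal_scope.

Theorem corollary3 (R : realType) :
  exists (dA dB : nat) (rho : 'M[R[i]]_(dA * dB)),
    density rho /\ squashed_ent rho < squashed_ent_pure rho.
Proof.
exists 2%N, 2%N, (maxcorr R 2); split; first exact: maxcorr_density.
apply: (@le_lt_trans _ _ 0).
  apply: ereal_inf_lbound; exists (existT _ 2%N (maxcorr_ext R 2)).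
    by split; [exact: maxcorr_ext_density | exact: red_AB_maxcorr_ext].
  by rewrite /= cmi_maxcorr_ext.
apply: (@lt_le_trans _ _ (ln (2 : R))%:E); first by rewrite lte_fin ln_gt0 ?ltr1n.
apply: le_ereal_inf_tmp => _ [[dC M] /= [pM rho_AB] <-].
by rewrite (cmi_pure_ext_maxcorr _ pM rho_AB).
Qed.
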